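(* Let $(\mathcal{B},\|\cdot\|)$ be a Banach algebra with unity $e$ and let $U\subset\mathbb{R}^d$ be open. Assume $A,X:U\to\mathcal{B}$ are $C^s$-maps, $s\in\mathbb{N}_0$, and $A^{-1}(\lambda)$ exists for all $\lambda\in U$. Suppose there exist constants $\epsilon>0$, $M\ge1$, $C\ge1$ with $\|\partial^\beta A^{-1}(\lambda)\|\le MC^{|\beta|_1}$ and $\|\partial^\beta X(\lambda)\|\le\epsilon C^{|\beta|_1}$ for all $\lambda\in U$, $0\le|\beta|_1\le s$, and $\epsilon M\le\frac12$. Then $(A+X)(\lambda)$ is invertible in $\mathcal{B}$ for all $\lambda\in U$ and $$\|\partial^\beta(A+X)^{-1}(\lambda)\|\le2\Big(\sum_{k=1}^{|\beta|_1+1}k^{|\beta|_1}\|e\|^k\Big)M(2C)^{|\beta|_1}\quad\text{for }\lambda\in U,\ 0\le|\beta|_1\le s.$$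
   Context: $\beta\in\mathbb{N}_0^d$ is a multi-index, $|\beta|_1=\sum_i\beta_i$, $\partial^\beta$ the corresponding partial derivative. *)

From HB Require Import structures.
From mathcomp Require Import all_boot all_order all_algebra.
From mathcomp Require Import all_classical all_reals all_analysis.
Set Implicit Arguments. Unset Strict Implicit. Unset Printing Implicit Defensive.
Import Order.TTheory GRing.Theory Num.Theory.
Import numFieldNormedType.Exports.
Local Open Scope classical_set_scope.
Local Open Scope ring_scope.

(* A (real) Banach algebra with unity e: a complete normed R-vector space B
   with an associative bilinear multiplication [mul] having two-sided unit e
   and a submultiplicative norm.  (No normalisation ||e|| = 1 is assumed.) *)
Record banach_algebra (R : realType) (B : completeNormedModType R)
    (mul : B -> B -> B) (e : B) : Prop := {
  ba_assoc : associative mul;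
  ba_mul1l : left_id e mul;
  ba_mul1r : right_id e mul;
  ba_mulDl : left_distributive mul +%R;
  ba_mulDr : right_distributive mul +%R;
  ba_scalel : forall (a : R) (x y : B), mul (a *: x) y = a *: mul x y;
  ba_scaler : forall (a : R) (x y : B), mul x (a *: y) = a *: mul x y;
  ba_submult : forall x y : B, `|mul x y| <= `|x| * `|y|
}.

Definition is_inverse (B : Type) (mul : B -> B -> B) (e x y : B) : Prop :=
  mul x y = e /\ mul y x = e.

Definition unitv (R : realType) (d : nat) (i : 'I_d) : 'rV[R]_d := delta_mx 0 i.

Definition partial (R : realType) (d : nat) (B : normedModType R)
    (i : 'I_d) (f : 'rV[R]_d -> B) : 'rV[R]_d -> B :=
  fun x => 'D_(unitv R i) f x.

(* iterated partial derivative along the list of directions l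
   (the head of l is the outermost derivative) *)
Definition iter_partial (R : realType) (d : nat) (B : normedModType R)
    (l : seq 'I_d) (f : 'rV[R]_d -> B) : 'rV[R]_d -> B :=
  foldr (@partial R d B) f l.

Definition mindex_norm (d : nat) (beta : 'I_d -> nat) : nat :=
  (\sum_(i < d) beta i)%N.

Definition dpartial (R : realType) (d : nat) (B : normedModType R)
    (beta : 'I_d -> nat) (f : 'rV[R]_d -> B) : 'rV[R]_d -> B :=
  iter_partial (flatten [seq nseq (beta i) i | i <- enum 'I_d]) f.

Definition Cs_on (R : realType) (d : nat) (B : normedModType R)
    (s : nat) (U : set 'rV[R]_d) (f : 'rV[R]_d -> B) : Prop :=
  forall l : seq 'I_d, (size l <= s)%N ->
    (forall x, U x -> {for x, continuous (iter_partial l f)}) /\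
    ((size l < s)%N -> forall (i : 'I_d) x, U x ->
        derivable (iter_partial l f) x (unitv R i)).

From HB Require Import structures.
From mathcomp Require Import all_boot all_order all_algebra.
From mathcomp Require Import all_classical all_reals all_analysis.
From mathcomp Require Import ring lra zify.
Import Order.TTheory GRing.Theory Num.Theory.
Import numFieldNormedType.Exports.
Local Open Scope classical_set_scope.
Local Open Scope ring_scope.
Set Implicit Arguments. Unset Strict Implicit. Unset Printing Implicit Defensive.

(* Writing [T = A^-1 X], one has [|T| <= eps M <= 1/2], so [e + T] is
   inverted by a Neumann series and [Y = (e + T)^-1 A^-1] inverts [A + X].
   [Y] is C^s because inversion preserves C^s, by [d (Z^-1) = - Z^-1 (d Z) Z^-1].
   For the bounds, [A^-1 = Y + Y X A^-1]; by Leibniz the derivatives of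
   [X A^-1] of order k are at most [eps M (2C)^k <= (2C)^k / 2], so in the
   Leibniz expansion of [d^beta (Y X A^-1)] the top-order term is at most half
   of [|d^beta Y|] and can be absorbed.  Induction on [|beta|] then gives
   [|d^beta Y| <= 2 M C^n 4^n n! <= 2 M (2C)^n (n+1)^n] with [n = |beta|];
   as [y = e y] forces [|y| <= |e|^(n+1) |y|], this is at most the claimed
   bound whatever the value of [|e|].
   The hypotheses only bound derivatives taken in the canonical order, i.e.
   along sorted lists of directions; subsequences of sorted lists are sorted,
   so all Leibniz expansions stay within the controlled derivatives. *)

Lemma sum_pow2 n : ((\sum_(j < n) 2 ^ j).+1 = 2 ^ n)%N.
Proof.
elim: n => [|n IH]; first by rewrite big_ord0.
by rewrite big_ord_recr /= -addSn IH expnS; lia.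
Qed.

Lemma binomial_fact_pow_le n :
  (1 + \sum_(j < n) 'C(n, j) * (4 ^ j * j`!) * 2 ^ (n - j) <= 4 ^ n * n`!)%N.
Proof.
have term_le (j : 'I_n) :
    ('C(n, j) * (4 ^ j * j`!) * 2 ^ (n - j) <= n`! * 2 ^ n * 2 ^ j)%N.
  have jn : (j <= n)%N := ltnW (ltn_ord j).
  have binj : ('C(n, j) * j`! <= n`!)%N.
    by rewrite -(bin_fact jn) mulnA leq_pmulr ?fact_gt0.
  have -> : ('C(n, j) * (4 ^ j * j`!) * 2 ^ (n - j)
            = 'C(n, j) * j`! * 2 ^ j * (2 ^ (n - j) * 2 ^ j))%N.
    by rewrite -[4%N]/(2 * 2)%N expnMn; ring.
  by rewrite -expnD subnK // mulnAC leq_mul2r leq_mul2r binj !orbT.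
apply: (@leq_trans (1 + \sum_(j < n) n`! * 2 ^ n * 2 ^ j)%N).
  by rewrite leq_add2l; apply: leq_sum => j _; exact: term_le.
have -> : (\sum_(j < n) n`! * 2 ^ n * 2 ^ j = n`! * 2 ^ n * (2 ^ n - 1))%N.
  by rewrite -big_distrr /= -sum_pow2 subn1.
rewrite -[4%N]/(2 * 2)%N expnMn.
have := fact_gt0 n; have := expn_gt0 2 n; nia.
Qed.

Lemma bernoulli_expn m k : (m ^ k.+1 + k.+1 * m ^ k <= m.+1 ^ k.+1)%N.
Proof.
elim: k => [|k IH]; first by rewrite !expn1 expn0; lia.
have := leq_mul (leqnn m.+1) IH.
rewrite (expnS m k.+1) (expnS m.+1 k.+1) (expnS m k).
nia.
Qed.

Lemma expn2_fact_le n : (2 ^ n * n`! <= n.+1 ^ n)%N.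
Proof.
elim: n => [//|n IH].
rewrite expnS factS.
have := bernoulli_expn n.+1 n; rewrite (expnS n.+1 n).
nia.
Qed.

Lemma pascal_sum (K : comPzRingType) (phi psi : nat -> K) n :
  \sum_(j < n.+2) 'C(n.+1, j)%:R * phi j * psi (n.+1 - j)%N =
  \sum_(j < n.+1) 'C(n, j)%:R * phi j.+1 * psi (n - j)%N +
  \sum_(j < n.+1) 'C(n, j)%:R * phi j * psi (n - j).+1.
Proof.
rewrite big_ord_recl /=.
under eq_bigr do rewrite /bump /= add1n binS natrD !mulrDl subSS.
rewrite big_split /= [RHS]addrC addrA; congr (_ + _).
rewrite [RHS]big_ord_recl /= [in X in _ + X = _]big_ord_recr /=.
rewrite (bin_small (ltnSn n)) !mul0r addr0 !bin0 !subn0; congr (_ + _).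
by apply: eq_bigr => j _; rewrite /bump /= subnSK.
Qed.

Definition mindex_seq (d : nat) (beta : 'I_d -> nat) : seq 'I_d :=
  flatten [seq nseq (beta i) i | i <- enum 'I_d].

Lemma dpartialE (R : realType) (d : nat) (B : normedModType R)
    (beta : 'I_d -> nat) (f : 'rV[R]_d -> B) :
  dpartial beta f = iter_partial (mindex_seq beta) f.
Proof. by []. Qed.

Lemma size_mindex_seq d (beta : 'I_d -> nat) :
  size (mindex_seq beta) = mindex_norm beta.
Proof.
rewrite size_flatten /shape -map_comp sumnE big_map big_enum /=.
by apply: eq_bigr => i _; exact: size_nseq.
Qed.

Lemma count_mindex_seq d (beta : 'I_d -> nat) i :
  count_mem i (mindex_seq beta) = beta i.
Proof.
rewrite count_flatten -map_comp sumnE big_map big_enum /= (bigD1 i) //=.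
rewrite count_nseq /= eqxx mul1n big1 ?addn0 // => j ji.
by rewrite count_nseq /= (negbTE ji).
Qed.

Lemma sorted_mindex_seq d (beta : 'I_d -> nat) : sorted <=%O (mindex_seq beta).
Proof.
rewrite /mindex_seq (sorted_pairwise le_trans).
have : sorted (relpre val ltn) (enum 'I_d).
  by rewrite -sorted_map val_enum_ord iota_ltn_sorted.
elim: (enum 'I_d) => [//|i s IH] /= i_s.
rewrite pairwise_cat (IH (path_sorted i_s)) andbT; apply/andP; split.
  apply/allrelP => a b /nseqP [-> _] /flattenP [t /mapP [j js ->]] /nseqP [-> _].
  have val_ltn_trans : transitive (relpre val ltn : rel 'I_d).
    by move=> u v w; exact: ltn_trans.
  by have /allP/(_ j js)/ltnW := order_path_min val_ltn_trans i_s.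
by elim: (beta i) => //= k ->; rewrite andbT; apply/allP => y /nseqP [-> _].
Qed.

Lemma mindex_seq_count d (l : seq 'I_d) :
  sorted <=%O l -> mindex_seq (fun i => count_mem i l) = l.
Proof.
move=> sl; apply: (sorted_eq le_trans le_anti (sorted_mindex_seq _) sl).
by apply/allP => i _ /=; rewrite count_mindex_seq.
Qed.

Lemma subseq_sorted_size d s (l m : seq 'I_d) : subseq m l ->
  sorted <=%O l -> (size l <= s)%N -> sorted <=%O m /\ (size m <= s)%N.
Proof.
move=> ml sl ls; split; first exact: (subseq_sorted (@le_trans _ 'I_d) ml sl).
exact: leq_trans (size_subseq ml) ls.
Qed.

Lemma iter_partial_sorted_le (R : realType) (B : normedModType R) (d : nat)
    (U : set 'rV[R]_d) (s : nat) (f : 'rV[R]_d -> B) (phi : nat -> R) :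
  (forall (beta : 'I_d -> nat) x, (mindex_norm beta <= s)%N -> U x ->
     `|dpartial beta f x| <= phi (mindex_norm beta)) ->
  forall l x, sorted <=%O l -> (size l <= s)%N -> U x ->
    `|iter_partial l f x| <= phi (size l).
Proof.
move=> f_le l x sl ls Ux.
have := f_le (fun i => count_mem i l) x.
by rewrite dpartialE -size_mindex_seq mindex_seq_count //; apply.
Qed.

Definition inv_deriv_bound (R : realType) (M C : R) (k : nat) : R :=
  2 * M * C ^+ k * (4 ^ k * k`!)%:R.

Lemma inv_deriv_bound_rec (R : realType) (M C : R) k : 0 <= M -> 0 <= C ->
  M * C ^+ k + \sum_(j < k) 'C(k, j)%:R * inv_deriv_bound M C j
                              * (2^-1 * (2 * C) ^+ (k - j))
  <= inv_deriv_bound M C k / 2.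
Proof.
move=> M0 C0.
have term j : (j <= k)%N ->
    'C(k, j)%:R * inv_deriv_bound M C j * (2^-1 * (2 * C) ^+ (k - j))
    = M * C ^+ k * ('C(k, j) * (4 ^ j * j`!) * 2 ^ (k - j))%:R.
  move=> jk; rewrite /inv_deriv_bound -{3}(subnKC jk) exprD exprMn.
  by rewrite !natrM !natrX; field.
rewrite (eq_bigr _ (fun (j : 'I_k) _ => term j (ltnW (ltn_ord j)))) -mulr_sumr -natr_sum.
rewrite -[X in X + _]mulr1 -mulrDr /inv_deriv_bound.
rewrite (_ : 2 * M * _ * _ / 2 = M * C ^+ k * (4 ^ k * k`!)%:R); last by field.
rewrite ler_wpM2l ?mulr_ge0 ?exprn_ge0 //.
by have := binomial_fact_pow_le k; rewrite -(ler_nat R) natrD.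
Qed.

Lemma inv_deriv_bound_le (R : realType) (M C a : R) n : 0 <= M -> 0 <= C -> 0 <= a ->
  a ^+ n.+1 * inv_deriv_bound M C n <=
  2 * (\sum_(1 <= k < n.+2) (k%:R ^+ n * a ^+ k)) * M * (2 * C) ^+ n.
Proof.
move=> M0 C0 a0.
have last_term : a ^+ n.+1 * (2 ^ n * n`!)%:R <= \sum_(1 <= k < n.+2) k%:R ^+ n * a ^+ k.
  rewrite big_nat_recr //= -[X in X <= _]add0r; apply: lerD.
    by apply: sumr_ge0 => k _; rewrite mulr_ge0 ?exprn_ge0.
  by rewrite mulrC ler_wpM2r ?exprn_ge0 // -natrX ler_nat expn2_fact_le.
have -> : a ^+ n.+1 * inv_deriv_bound M C n
    = 2 * M * (2 * C) ^+ n * (a ^+ n.+1 * (2 ^ n * n`!)%:R).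
  by rewrite /inv_deriv_bound -[4%N]/(2 * 2)%N expnMn !natrM !natrX exprMn; ring.
rewrite (_ : 2 * _ * M * _ = 2 * M * (2 * C) ^+ n * \sum_(1 <= k < n.+2) k%:R ^+ n * a ^+ k).
  by rewrite ler_wpM2l // !mulr_ge0 // exprn_ge0 // mulr_ge0.
by ring.
Qed.

Section BanachAlgebra.
Variables (R : realType) (B : completeNormedModType R) (mul : B -> B -> B) (e : B).
Hypothesis BA : banach_algebra mul e.

Lemma ba_mulNl x y : mul (- x) y = - mul x y.
Proof. by rewrite -scaleN1r (ba_scalel BA) scaleN1r. Qed.

Lemma ba_mulNr x y : mul x (- y) = - mul x y.
Proof. by rewrite -scaleN1r (ba_scaler BA) scaleN1r. Qed.

Lemma ba_mul0l x : mul 0 x = 0.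
Proof. by have := ba_scalel BA 0 0 x; rewrite !scale0r. Qed.

Lemma ba_mul0r x : mul x 0 = 0.
Proof. by have := ba_scaler BA 0 x 0; rewrite !scale0r. Qed.

Lemma ba_mulBl x y z : mul (x - y) z = mul x z - mul y z.
Proof. by rewrite (ba_mulDl BA) ba_mulNl. Qed.

Lemma ba_mulBr x y z : mul x (y - z) = mul x y - mul x z.
Proof. by rewrite (ba_mulDr BA) ba_mulNr. Qed.

Lemma ba_norm_le_unitX (x : B) k : `|x| <= `|e| ^+ k * `|x|.
Proof.
elim: k => [|k IH]; first by rewrite mul1r.
rewrite exprSr -mulrA; apply: le_trans IH _; rewrite ler_wpM2l ?exprn_ge0 //.
by rewrite -{1}[x](ba_mul1l BA) (ba_submult BA).
Qed.

Lemma ba_cvgM {T} (F : set_system T) {FF : Filter F} (a b : T -> B) la lb :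
  a @ F --> la -> b @ F --> lb -> (fun t => mul (a t) (b t)) @ F --> mul la lb.
Proof.
move=> ha hb; apply/subr_cvg0; apply: norm_cvg0.
have ub0 : (fun t => `|a t - la| * `|b t| + `|la| * `|b t - lb|) @ F --> (0 : R).
  suff : (fun t => `|a t - la| * `|b t| + `|la| * `|b t - lb|) @ F -->
         0 * `|lb| + `|la| * 0 by rewrite mul0r mulr0 addr0.
  apply: cvgD; apply: cvgM; [| exact: cvg_norm | exact: cvg_cst |].
  - by move/subr_cvg0/cvg_norm: ha; rewrite normr0.
  - by move/subr_cvg0/cvg_norm: hb; rewrite normr0.
apply: (squeeze_cvgr _ (cvg_cst 0) ub0); near=> t; rewrite normr_ge0 /=.
have -> : mul (a t) (b t) - mul la lb = mul (a t - la) (b t) + mul la (b t - lb).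
  by rewrite ba_mulBl ba_mulBr addrA subrK.
by apply: le_trans (ler_normD _ _) _; apply: lerD; exact: (ba_submult BA).
Unshelve. all: by end_near. Qed.

(* The second hypothesis is the resolvent identity satisfied by
   [V t = (Z t)^-1] and [V0 = Z0^-1]. *)
Lemma ba_inverse_cvg {T} (F : set_system T) {FF : Filter F} (Z V : T -> B) Z0 V0 :
  Z @ F --> Z0 ->
  (\forall t \near F, V t - V0 = mul (V t) (mul (Z0 - Z t) V0)) ->
  V @ F --> V0.
Proof.
move=> cvgZ resolvent; apply/subr_cvg0; apply: norm_cvg0.
set k := `|V0|; have k0 : 0 <= k := normr_ge0 _.
have ub0 : (fun t => 2 * k * k * `|Z0 - Z t|) @ F --> (0 : R).
  rewrite -(mulr0 (2 * k * k)) -(normr0 B); apply: cvgMl_tmp; apply: cvg_norm.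
  by rewrite -(subrr Z0); apply: cvgB => //; exact: cvg_cst.
apply: (squeeze_cvgr _ (cvg_cst 0) ub0).
have small : \forall t \near F, `|Z0 - Z t| <= (2 * (k + 1))^-1.
  by apply: cvgr_dist_le => //; rewrite invr_gt0 mulr_gt0 // ltr_wpDl.
near=> t; rewrite normr_ge0 /=.
have Vt : V t - V0 = mul (V t) (mul (Z0 - Z t) V0) by near: t.
have dt : `|Z0 - Z t| <= (2 * (k + 1))^-1 by near: t.
set w := `|Z0 - Z t| * k.
have w0 : 0 <= w by rewrite mulr_ge0.
have w_half : w <= 2^-1.
  apply: le_trans (ler_wpM2r k0 dt) _.
  by rewrite invfM mulrAC ler_pdivrMr ?ltr_wpDl //; lra.
have dV : `|V t - V0| <= `|V t| * w.
  rewrite Vt; apply: le_trans (ba_submult BA _ _) _.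
  by rewrite ler_wpM2l //; exact: (ba_submult BA).
have Vt_le : `|V t| <= k + `|V t - V0|.
  by have := ler_normD V0 (V t - V0); rewrite addrC subrK.
have Vt_le2k : `|V t| <= 2 * k by nra.
rewrite (_ : 2 * k * k * `|Z0 - Z t| = 2 * k * w); last by rewrite /w; ring.
nra.
Unshelve. all: by end_near. Qed.

Definition neumann_term (T : B) (n : nat) : B := iter n (mul (- T)) e.

Definition neumann (T : B) : B := limn (series (neumann_term T)).

Lemma neumann_termC T n : mul (neumann_term T n) (- T) = mul (- T) (neumann_term T n).
Proof.
elim: n => [|n IH] /=; first by rewrite (ba_mul1l BA) (ba_mul1r BA).
by rewrite -(ba_assoc BA) IH.
Qed.

Lemma norm_neumann_term_le T n :
  `|T| <= 2^-1 -> `|neumann_term T n| <= `|e| * 2^-1 ^+ n.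
Proof.
move=> T_half; elim: n => [|n IH] /=; first by rewrite expr0 mulr1.
apply: le_trans (ba_submult BA _ _) _; rewrite exprS mulrCA normrN.
by rewrite ler_pM.
Qed.

Lemma neumann_inverse T : `|T| <= 2^-1 -> is_inverse mul e (e + T) (neumann T).
Proof.
move=> T_half.
have cvg_sum : cvgn (series (neumann_term T)).
  apply: normed_cvg.
  apply: (series_le_cvg _ _ (fun n => norm_neumann_term_le n T_half)).
  - by move=> n; exact: normr_ge0.
  - by move=> n; rewrite mulr_ge0 ?exprn_ge0.
  by apply: is_cvg_geometric_series; rewrite ger0_norm // invf_lt1 // ltr1n.
have telescope n : mul (e + T) (series (neumann_term T) n) = e - neumann_term T n
    /\ mul (series (neumann_term T) n) (e + T) = e - neumann_term T n.
  elim: n => [|n [IHl IHr]].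
    by rewrite /series /= big_geq // ba_mul0l ba_mul0r subrr.
  have tS : neumann_term T n.+1 = mul (- T) (neumann_term T n) by [].
  rewrite seriesSr tS; split.
  - rewrite (ba_mulDr BA) IHl (ba_mulDl BA) (ba_mul1l BA) ba_mulNl opprK.
    by rewrite addrA subrK.
  - rewrite (ba_mulDl BA) IHr (ba_mulDr BA) (ba_mul1r BA) -neumann_termC.
    by rewrite ba_mulNr opprK addrA subrK.
have limit_e : e - neumann_term T n @[n --> \oo] --> e.
  rewrite -[X in _ --> X]subr0; apply: cvgB; first exact: cvg_cst.
  exact: cvg_series_cvg_0.
split.
- have lim_neumann : mul (e + T) (series (neumann_term T) n) @[n --> \oo] -->
                     mul (e + T) (neumann T).
    by apply: ba_cvgM cvg_sum; exact: cvg_cst.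
  apply: (cvg_unique _ lim_neumann) => //=.
  by under eq_fun do rewrite (telescope _).1.
- have lim_neumann : mul (series (neumann_term T) n) (e + T) @[n --> \oo] -->
                     mul (neumann T) (e + T).
    by apply: ba_cvgM cvg_sum _; exact: cvg_cst.
  apply: (cvg_unique _ lim_neumann) => //=.
  by under eq_fun do rewrite (telescope _).2.
Qed.

Lemma perturbed_inverse a ainv x : is_inverse mul e a ainv ->
  `|mul ainv x| <= 2^-1 ->
  is_inverse mul e (a + x) (mul (neumann (mul ainv x)) ainv).
Proof.
move=> [a_ainv ainv_a] /neumann_inverse [nl nr].
have -> : a + x = mul a (e + mul ainv x).
  by rewrite (ba_mulDr BA) (ba_mul1r BA) (ba_assoc BA) a_ainv (ba_mul1l BA).
split; first by rewrite -(ba_assoc BA) (ba_assoc BA _ _ ainv) nl (ba_mul1l BA).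
by rewrite -(ba_assoc BA) (ba_assoc BA ainv) ainv_a (ba_mul1l BA).
Qed.

Lemma perturbed_inverseE a ainv x y : is_inverse mul e a ainv ->
  is_inverse mul e (a + x) y -> ainv = y + mul y (mul x ainv).
Proof.
move=> [a_ainv _] [_ y_ax].
symmetry; rewrite -{1}[y](ba_mul1r BA) -a_ainv !(ba_assoc BA) -(ba_mulDl BA).
by rewrite -(ba_mulDr BA) y_ax (ba_mul1l BA).
Qed.

End BanachAlgebra.

Section Derivatives.
Variables (R : realType) (B : completeNormedModType R) (mul : B -> B -> B) (e : B).
Hypothesis BA : banach_algebra mul e.
Variable V : normedModType R.

Lemma derivable_line_cvg (W : normedModType R) (f : V -> W) x v :
  derivable f x v -> f (h *: v + x) @[h --> 0^'] --> f x.
Proof.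
move=> /derivable1P/derivable1_diffP/differentiable_continuous/continuous_withinNx.
by rewrite scale0r add0r.
Qed.

Lemma ba_derivable_cvgM (f g : V -> B) x v :
  derivable f x v -> derivable g x v ->
  (fun h : R => h^-1 *: (((fun y => mul (f y) (g y)) \o shift x) (h *: v)
      - mul (f x) (g x))) @ 0^' --> mul ('D_v f x) (g x) + mul (f x) ('D_v g x).
Proof.
move=> df dg.
have -> : (fun h : R => h^-1 *: (((fun y => mul (f y) (g y)) \o shift x) (h *: v)
      - mul (f x) (g x))) =
   (fun h : R => mul (h^-1 *: ((f \o shift x) (h *: v) - f x)) (g (h *: v + x))
      + mul (f x) (h^-1 *: ((g \o shift x) (h *: v) - g x))).
  apply: funext => h /=.
  rewrite (ba_scalel BA) (ba_scaler BA) -scalerDr (ba_mulBl BA) (ba_mulBr BA).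
  by rewrite addrA subrK.
apply: cvgD; apply: (ba_cvgM BA) => //; last exact: cvg_cst.
exact: derivable_line_cvg.
Qed.

Lemma ba_derivableM (f g : V -> B) x v :
  derivable f x v -> derivable g x v -> derivable (fun y => mul (f y) (g y)) x v.
Proof. by move=> df dg; apply/cvg_ex; eexists; exact: ba_derivable_cvgM. Qed.

Lemma ba_deriveM (f g : V -> B) x v :
  derivable f x v -> derivable g x v ->
  'D_v (fun y => mul (f y) (g y)) x = mul ('D_v f x) (g x) + mul (f x) ('D_v g x).
Proof. by move=> df dg; apply: cvg_lim (ba_derivable_cvgM df dg). Qed.

Lemma ba_continuousM (f g : V -> B) x :
  {for x, continuous f} -> {for x, continuous g} ->
  {for x, continuous (fun y => mul (f y) (g y))}.
Proof. by move=> cf cg; apply: (ba_cvgM BA). Qed.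

Section Inverse.
Variables (U : set V) (Z Zinv : V -> B).
Hypotheses (oU : open U) (ZZinv : forall y, U y -> is_inverse mul e (Z y) (Zinv y)).

Lemma inverse_resolvent x y : U x -> U y ->
  Zinv y - Zinv x = mul (Zinv y) (mul (Z x - Z y) (Zinv x)).
Proof.
move=> Ux Uy; have [Zx_inv _] := ZZinv Ux; have [_ Zy_inv] := ZZinv Uy.
rewrite (ba_mulBl BA) (ba_mulBr BA) Zx_inv (ba_mul1r BA) (ba_assoc BA) Zy_inv.
by rewrite (ba_mul1l BA).
Qed.

Lemma continuous_inverse x : U x -> {for x, continuous Z} -> {for x, continuous Zinv}.
Proof.
move=> Ux cZ; apply: (ba_inverse_cvg BA (F := nbhs x) cZ).
near=> y; apply: inverse_resolvent => //; near: y; exact: open_nbhs_nbhs.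
Unshelve. all: by end_near. Qed.

Lemma derivable_inverse_cvg x v : U x -> derivable Z x v ->
  (fun h : R => h^-1 *: ((Zinv \o shift x) (h *: v) - Zinv x)) @ 0^' -->
     - mul (Zinv x) (mul ('D_v Z x) (Zinv x)).
Proof.
move=> Ux dZ.
have near_U : \forall h \near 0^', U (h *: v + x).
  exact: derivable_line_cvg (@derivable_id _ _ x v) _ (open_nbhs_nbhs (conj oU Ux)).
have cZinv : Zinv (h *: v + x) @[h --> 0^'] --> Zinv x.
  apply: (ba_inverse_cvg BA (derivable_line_cvg dZ)).
  by near=> h; apply: inverse_resolvent => //; near: h.
have lim_rhs : (fun h : R => - mul (Zinv (h *: v + x))
    (mul (h^-1 *: ((Z \o shift x) (h *: v) - Z x)) (Zinv x))) @ 0^' -->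
    - mul (Zinv x) (mul ('D_v Z x) (Zinv x)).
  apply: cvgN; apply: (ba_cvgM BA) cZinv _.
  by apply: (ba_cvgM BA) dZ _; exact: cvg_cst.
apply: cvg_trans lim_rhs; apply: near_eq_cvg; near=> h.
have Uh : U (h *: v + x) by near: h.
rewrite /= (inverse_resolvent Ux Uh) (ba_scalel BA) (ba_scaler BA).
by rewrite -opprB (ba_mulNl BA) (ba_mulNr BA) scalerN opprK.
Unshelve. all: by end_near. Qed.

Lemma derivable_inverse x v : U x -> derivable Z x v -> derivable Zinv x v.
Proof. by move=> Ux dZ; apply/cvg_ex; eexists; exact: derivable_inverse_cvg. Qed.

Lemma derive_inverse x v : U x -> derivable Z x v ->
  'D_v Zinv x = - mul (Zinv x) (mul ('D_v Z x) (Zinv x)).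
Proof. by move=> Ux dZ; apply: cvg_lim (derivable_inverse_cvg Ux dZ). Qed.

End Inverse.
End Derivatives.

Section SmoothOnOpen.
Variables (R : realType) (B : completeNormedModType R) (mul : B -> B -> B) (e : B).
Hypothesis BA : banach_algebra mul e.
Variables (d : nat) (U : set 'rV[R]_d).
Hypothesis oU : open U.
Implicit Types (f g : 'rV[R]_d -> B) (l : seq 'I_d).

Definition eq_on f g := forall x, U x -> f x = g x.

Lemma near_eq_on f g x : eq_on f g -> U x -> \forall y \near x, f y = g y.
Proof.
move=> fg Ux; near=> y; apply: fg; near: y; exact: open_nbhs_nbhs.
Unshelve. all: by end_near. Qed.

Lemma eq_on_partial i f g : eq_on f g -> eq_on (partial i f) (partial i g).
Proof. by move=> fg x Ux; apply: near_eq_derive; exact: near_eq_on. Qed.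

Lemma eq_on_iter_partial l f g :
  eq_on f g -> eq_on (iter_partial l f) (iter_partial l g).
Proof. by elim: l => [//|i l IH] fg /=; apply: eq_on_partial; exact: IH. Qed.

Lemma Cs_on_eq s f g : eq_on f g -> Cs_on s U f -> Cs_on s U g.
Proof.
move=> fg cf l ls; have [cl dl] := cf l ls.
have near_fg x : U x -> \forall y \near x, iter_partial l f y = iter_partial l g y.
  by move=> Ux; apply: near_eq_on Ux; exact: eq_on_iter_partial.
split=> [x Ux | ls' i x Ux].
  rewrite /prop_for /continuous_at -(eq_on_iter_partial l fg Ux).
  apply: cvg_trans (cl x Ux); apply: (@near_eq_cvg _ _ (nbhs x)).
  by apply: filterS (near_fg x Ux) => y ->.
exact: near_eq_derivable (near_fg x Ux) (dl ls' i x Ux).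
Qed.

Lemma Cs_on_leq s s' f : (s' <= s)%N -> Cs_on s U f -> Cs_on s' U f.
Proof.
move=> s's cf l ls'; have [cl dl] := cf l (leq_trans ls' s's).
by split=> // ls; apply: dl; exact: leq_trans ls s's.
Qed.

Lemma Cs_on_continuous s f x : Cs_on s U f -> U x -> {for x, continuous f}.
Proof. by move=> cf Ux; exact: (cf [::] isT).1. Qed.

Lemma Cs_on_derivable s f i x : Cs_on s.+1 U f -> U x -> derivable f x (unitv R i).
Proof. by move=> cf Ux; exact: (cf [::] isT).2. Qed.

Lemma iter_partial_rcons l i f :
  iter_partial (rcons l i) f = iter_partial l (partial i f).
Proof. by rewrite /iter_partial -cats1 foldr_cat. Qed.

Lemma Cs_on_partial s i f : Cs_on s.+1 U f -> Cs_on s U (partial i f).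
Proof.
move=> cf l ls; have := cf (rcons l i); rewrite size_rcons iter_partial_rcons.
by case=> // cl dl; split=> // ls'; apply: dl.
Qed.

Lemma Cs_on0 f : (forall x, U x -> {for x, continuous f}) -> Cs_on 0 U f.
Proof. by move=> cf [|//] _; split. Qed.

Lemma Cs_onS s f : (forall x, U x -> {for x, continuous f}) ->
  (forall i x, U x -> derivable f x (unitv R i)) ->
  (forall i, Cs_on s U (partial i f)) -> Cs_on s.+1 U f.
Proof.
move=> cf df cpf; case/lastP => [|l i] ls; first by split.
rewrite iter_partial_rcons; rewrite size_rcons in ls.
have [cl dl] := cpf i l ls; split=> // ls'; apply: dl.
by rewrite size_rcons in ls'.
Qed.

Lemma Cs_onD s f g : Cs_on s U f -> Cs_on s U g -> Cs_on s U (f + g).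
Proof.
elim: s f g => [|s IH] f g cf cg.
  apply: Cs_on0 => x Ux.
  by apply: continuousD; [exact: Cs_on_continuous cf Ux|exact: Cs_on_continuous cg Ux].
apply: Cs_onS => [x Ux|i x Ux|i].
- by apply: continuousD; [exact: Cs_on_continuous cf Ux|exact: Cs_on_continuous cg Ux].
- by apply: derivableD; [exact: Cs_on_derivable cf Ux|exact: Cs_on_derivable cg Ux].
apply: (@Cs_on_eq _ (partial i f + partial i g)).
  move=> x Ux; rewrite /partial deriveD //.
  + exact: Cs_on_derivable cf Ux.
  + exact: Cs_on_derivable cg Ux.
by apply: IH; exact: Cs_on_partial.
Qed.

Lemma Cs_onN s f : Cs_on s U f -> Cs_on s U (- f).
Proof.
elim: s f => [|s IH] f cf.
  by apply: Cs_on0 => x Ux; apply: continuousN; exact: Cs_on_continuous cf Ux.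
apply: Cs_onS => [x Ux|i x Ux|i].
- by apply: continuousN; exact: Cs_on_continuous cf Ux.
- by apply: derivableN; exact: Cs_on_derivable cf Ux.
apply: (@Cs_on_eq _ (- partial i f)).
  by move=> x Ux; rewrite /partial deriveN //; exact: Cs_on_derivable cf Ux.
by apply: IH; exact: Cs_on_partial.
Qed.

Lemma Cs_onM s f g : Cs_on s U f -> Cs_on s U g ->
  Cs_on s U (fun y => mul (f y) (g y)).
Proof.
elim: s f g => [|s IH] f g cf cg.
  apply: Cs_on0 => x Ux; apply: (ba_continuousM BA).
  + exact: Cs_on_continuous cf Ux.
  + exact: Cs_on_continuous cg Ux.
apply: Cs_onS => [x Ux|i x Ux|i].
- apply: (ba_continuousM BA).
  + exact: Cs_on_continuous cf Ux.
  + exact: Cs_on_continuous cg Ux.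
- apply: (ba_derivableM BA).
  + exact: Cs_on_derivable cf Ux.
  + exact: Cs_on_derivable cg Ux.
apply: (@Cs_on_eq _ ((fun y => mul (partial i f y) (g y)) +
                     (fun y => mul (f y) (partial i g y)))).
  move=> x Ux; rewrite /partial (ba_deriveM BA) //.
  + exact: Cs_on_derivable cf Ux.
  + exact: Cs_on_derivable cg Ux.
apply: Cs_onD; apply: IH.
- exact: Cs_on_partial.
- exact: Cs_on_leq cg.
- exact: Cs_on_leq cf.
- exact: Cs_on_partial.
Qed.

Lemma Cs_on_inverse s Z Zinv : Cs_on s U Z ->
  (forall y, U y -> is_inverse mul e (Z y) (Zinv y)) -> Cs_on s U Zinv.
Proof.
move=> + ZZinv; elim: s => [|s IH] cZ.
  apply: Cs_on0 => x Ux.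
  by apply: (continuous_inverse BA oU ZZinv Ux); exact: Cs_on_continuous cZ Ux.
apply: Cs_onS => [x Ux|i x Ux|i].
- by apply: (continuous_inverse BA oU ZZinv Ux); exact: Cs_on_continuous cZ Ux.
- by apply: (derivable_inverse BA oU ZZinv Ux); exact: Cs_on_derivable cZ Ux.
apply: (@Cs_on_eq _ (- (fun y => mul (Zinv y) (mul (partial i Z y) (Zinv y))))).
  move=> x Ux; rewrite /partial (derive_inverse BA oU ZZinv Ux) //.
  exact: Cs_on_derivable cZ Ux.
have cZinv : Cs_on s U Zinv by apply: IH; exact: Cs_on_leq cZ.
by apply/Cs_onN/Cs_onM/Cs_onM => //; exact: Cs_on_partial.
Qed.

Lemma iter_partialD l f g : Cs_on (size l) U f -> Cs_on (size l) U g ->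
  eq_on (iter_partial l (f + g)) (iter_partial l f + iter_partial l g).
Proof.
elim: l => [//|i l IH] /= cf cg x Ux.
have [_ df] := cf l (leqnSn _); have [_ dg] := cg l (leqnSn _).
rewrite (eq_on_partial i (IH (Cs_on_leq (leqnSn _) cf) (Cs_on_leq (leqnSn _) cg)) Ux).
by rewrite /partial deriveD //; [exact: df | exact: dg].
Qed.

Lemma norm_iter_partialM_le f g (phi psi : nat -> R) x l :
  U x -> Cs_on (size l) U f -> Cs_on (size l) U g ->
  (forall m, subseq m l -> `|iter_partial m f x| <= phi (size m)) ->
  (forall m, subseq m l -> `|iter_partial m g x| <= psi (size m)) ->
  `|iter_partial l (fun y => mul (f y) (g y)) x| <=
    \sum_(j < (size l).+1) 'C(size l, j)%:R * phi j * psi (size l - j)%N.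
Proof.
move=> Ux; elim/last_ind: l f g phi psi => [|l i IH] f g phi psi cf cg f_le g_le.
  rewrite big_ord_recl big_ord0 addr0 bin0 mul1r.
  apply: le_trans (ba_submult BA _ _) _.
  by apply: ler_pM; [exact: normr_ge0|exact: normr_ge0|exact: (f_le [::])|exact: (g_le [::])].
rewrite size_rcons in cf cg *; rewrite iter_partial_rcons pascal_sum.
have sub_rcons m : subseq m l -> subseq (rcons m i) (rcons l i).
  by rewrite -!cats1 subseq_cat2r.
have sub_l m : subseq m l -> subseq m (rcons l i).
  by move=> ml; exact: subseq_trans ml (subseq_rcons l i).
have cf' := Cs_on_leq (leqnSn _) cf; have cg' := Cs_on_leq (leqnSn _) cg.
have cdf := Cs_on_partial i cf; have cdg := Cs_on_partial i cg.
have leibniz : eq_on (partial i (fun y => mul (f y) (g y)))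
    ((fun y => mul (partial i f y) (g y)) + (fun y => mul (f y) (partial i g y))).
  move=> y Uy; rewrite /partial (ba_deriveM BA) //.
  + exact: Cs_on_derivable cf Uy.
  + exact: Cs_on_derivable cg Uy.
rewrite (eq_on_iter_partial l leibniz Ux).
rewrite (iter_partialD (Cs_onM cdf cg') (Cs_onM cf' cdg) Ux).
apply: le_trans (ler_normD _ _) _; apply: lerD.
- apply: (IH _ _ (fun k => phi k.+1)) => // m ml; last exact/g_le/sub_l.
  by rewrite -iter_partial_rcons -(size_rcons m i); exact/f_le/sub_rcons.
- apply: (IH _ _ _ (fun k => psi k.+1)) => // m ml; first exact/f_le/sub_l.
  by rewrite -iter_partial_rcons -(size_rcons m i); exact/g_le/sub_rcons.
Qed.

End SmoothOnOpen.

Section PerturbedInverseBounds.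
Variables (R : realType) (B : completeNormedModType R) (mul : B -> B -> B) (e : B).
Hypothesis BA : banach_algebra mul e.
Variables (d : nat) (U : set 'rV[R]_d) (s : nat) (X Ainv Y : 'rV[R]_d -> B).
Variables (eps M C : R).
Hypotheses (oU : open U) (cX : Cs_on s U X) (cAinv : Cs_on s U Ainv) (cY : Cs_on s U Y).
Hypotheses (M0 : 0 <= M) (C0 : 0 <= C) (epsM : eps * M <= 2^-1).
Hypothesis Ainv_le : forall l x, sorted <=%O l -> (size l <= s)%N -> U x ->
  `|iter_partial l Ainv x| <= M * C ^+ size l.
Hypothesis X_le : forall l x, sorted <=%O l -> (size l <= s)%N -> U x ->
  `|iter_partial l X x| <= eps * C ^+ size l.
Hypothesis resolvent :
  eq_on U Ainv (Y + (fun y => mul (Y y) (mul (X y) (Ainv y)))).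

Let XAinv y := mul (X y) (Ainv y).

Lemma norm_iter_partial_XAinv_le l x : sorted <=%O l -> (size l <= s)%N -> U x ->
  `|iter_partial l XAinv x| <= 2^-1 * (2 * C) ^+ size l.
Proof.
move=> sl ls Ux.
have sub_sorted m : subseq m l -> sorted <=%O m /\ (size m <= s)%N.
  by move=> ml; exact: subseq_sorted_size ml sl ls.
apply: le_trans (norm_iter_partialM_le BA oU (phi := fun k => eps * C ^+ k)
                   (psi := fun k => M * C ^+ k) Ux _ _ _ _) _.
- exact: Cs_on_leq cX.
- exact: Cs_on_leq cAinv.
- by move=> m /sub_sorted [sm ms]; exact: X_le.
- by move=> m /sub_sorted [sm ms]; exact: Ainv_le.
have -> : \sum_(j < (size l).+1) 'C(size l, j)%:R * (eps * C ^+ j) * (M * C ^+ (size l - j))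
    = eps * M * (C + C) ^+ size l.
  by rewrite exprDn mulr_sumr; apply: eq_bigr => j _; rewrite -mulr_natl; ring.
rewrite (_ : C + C = 2 * C); last by ring.
by rewrite ler_wpM2r // exprn_ge0 // mulr_ge0.
Qed.

Lemma norm_iter_partial_Y_le l x : sorted <=%O l -> (size l <= s)%N -> U x ->
  `|iter_partial l Y x| <= inv_deriv_bound M C (size l).
Proof.
have [k] := ubnP (size l); elim: k l x => // k IH l x; rewrite ltnS => lk sl ls Ux.
have sub_sorted m : subseq m l -> sorted <=%O m /\ (size m <= s)%N.
  by move=> ml; exact: subseq_sorted_size ml sl ls.
have cYl := Cs_on_leq ls cY.
have cXAinvl : Cs_on (size l) U XAinv := Cs_on_leq ls (Cs_onM BA oU cX cAinv).
have cYXAinvl := Cs_onM BA oU cYl cXAinvl.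
have Ainv_split : iter_partial l Ainv x =
    iter_partial l Y x + iter_partial l (fun y => mul (Y y) (XAinv y)) x.
  by rewrite (eq_on_iter_partial oU l resolvent Ux) (iter_partialD oU cYl cYXAinvl Ux).
set t := `|iter_partial l Y x|.
(* The top-order Leibniz term involves [t] itself, with coefficient 1/2. *)
pose phi j := if (j < size l)%N then inv_deriv_bound M C j else t.
have YXAinv_le : `|iter_partial l (fun y => mul (Y y) (XAinv y)) x| <=
    \sum_(j < size l) 'C(size l, j)%:R * inv_deriv_bound M C j
                       * (2^-1 * (2 * C) ^+ (size l - j)) + t / 2.
  apply: le_trans (norm_iter_partialM_le BA oU (phi := phi)
                     (psi := fun j => 2^-1 * (2 * C) ^+ j) Ux cYl cXAinvl _ _) _.
  - move=> m ml; rewrite /phi; case: ltnP => [ml_lt | lm_le].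
      have [sm ms] := sub_sorted m ml.
      by apply: IH => //; exact: leq_trans ml_lt lk.
    have /eqP -> // : m == l.
    by rewrite -(size_subseq_leqif ml).2 eqn_leq size_subseq.
  - by move=> m /sub_sorted [sm ms]; exact: norm_iter_partial_XAinv_le.
  rewrite big_ord_recr /= binn subnn /phi ltnn expr0 mulr1 mul1r mulrC.
  by under eq_bigr => j _ do rewrite ltn_ord.
set F := iter_partial l (fun y => mul (Y y) (XAinv y)) x in YXAinv_le Ainv_split.
have := ler_normB (iter_partial l Y x + F) F; rewrite addrK -/t -Ainv_split.
have := Ainv_le sl ls Ux; have := inv_deriv_bound_rec (size l) M0 C0.
lra.
Qed.

End PerturbedInverseBounds.

Theorem proposition24 (R : realType) (B : completeNormedModType R)
    (mul : B -> B -> B) (e : B) (d : nat) (U : set 'rV[R]_d) (s : nat)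
    (A X Ainv : 'rV[R]_d -> B) (eps M C : R) :
  banach_algebra mul e ->
  open U ->
  Cs_on s U A -> Cs_on s U X ->
  (forall lam, U lam -> is_inverse mul e (A lam) (Ainv lam)) ->
  0 < eps -> 1 <= M -> 1 <= C ->
  (forall (beta : 'I_d -> nat) lam, (mindex_norm beta <= s)%N -> U lam ->
     `|dpartial beta Ainv lam| <= M * C ^+ mindex_norm beta) ->
  (forall (beta : 'I_d -> nat) lam, (mindex_norm beta <= s)%N -> U lam ->
     `|dpartial beta X lam| <= eps * C ^+ mindex_norm beta) ->
  eps * M <= 2^-1 ->
  exists Y : 'rV[R]_d -> B,
    (forall lam, U lam -> is_inverse mul e (A lam + X lam) (Y lam)) /\
    Cs_on s U Y /\
    (forall (beta : 'I_d -> nat) lam, (mindex_norm beta <= s)%N -> U lam ->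
       `|dpartial beta Y lam| <=
         2 * (\sum_(1 <= k < (mindex_norm beta).+2)
                 (k%:R ^+ mindex_norm beta * `|e| ^+ k))
           * M * (2 * C) ^+ mindex_norm beta).
Proof.
(* Only [eps * M <= 1/2] matters. *)
move=> BA oU cA cX AAinv _ M1 C1 Ainv_dpartial_le X_dpartial_le epsM.
have [M0 C0] : 0 <= M /\ 0 <= C by split; exact: le_trans ler01 _.
have Ainv_le := iter_partial_sorted_le (phi := fun k => M * C ^+ k) Ainv_dpartial_le.
have X_le := iter_partial_sorted_le (phi := fun k => eps * C ^+ k) X_dpartial_le.
have AinvX_half lam : U lam -> `|mul (Ainv lam) (X lam)| <= 2^-1.
  move=> Ul; apply: le_trans (ba_submult BA _ _) (le_trans _ epsM).
  rewrite mulrC; apply: ler_pM => //.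
  - by have := X_le [::] lam isT isT Ul; rewrite mulr1.
  - by have := Ainv_le [::] lam isT isT Ul; rewrite mulr1.
pose Y lam := mul (neumann mul e (mul (Ainv lam) (X lam))) (Ainv lam).
have AXY lam : U lam -> is_inverse mul e (A lam + X lam) (Y lam).
  by move=> Ul; exact (perturbed_inverse BA (AAinv lam Ul) (AinvX_half lam Ul)).
have cAinv := Cs_on_inverse BA oU cA AAinv.
have cY := Cs_on_inverse BA oU (Cs_onD oU cA cX) AXY.
exists Y; split=> //; split=> // beta lam bs Ul.
have resolvent x : U x -> Ainv x = Y x + mul (Y x) (mul (X x) (Ainv x)).
  by move=> Ux; exact (perturbed_inverseE BA (AAinv x Ux) (AXY x Ux)).
have := norm_iter_partial_Y_le BA oU cX cAinv cY M0 C0 epsM Ainv_le X_le resolvent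
  (sorted_mindex_seq beta).
rewrite size_mindex_seq -dpartialE => /(_ lam bs Ul) Y_le.
apply: le_trans (ba_norm_le_unitX BA _ (mindex_norm beta).+1) _.
apply: le_trans (inv_deriv_bound_le _ M0 C0 (normr_ge0 e)).
by apply: ler_wpM2l Y_le; exact: exprn_ge0.
Qed.
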